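(* Let $n\ge1$. Identify each $n$-element subset of $\langle n\rangle$ with a partition inside the $n\times n$ square (as described in the context), so that meet $\wedge$ and join $\vee$ correspond to intersection and union of diagrams and $\alpha^t$ is the transpose. Define $\pi_n(\gamma):=(\gamma\wedge\gamma^t,\gamma\vee\gamma^t)$ for $\gamma\in\binom{\langle n\rangle}{n}$, and let $(\alpha,\beta)$ be in the image of $\pi_n$ (so $\alpha\subseteq\beta$ are symmetric partitions). Let $\Pi_+(\alpha,\beta)$ be the set of boxes of $\beta\setminus\alpha$ lying strictly above the main diagonal, and let $S_1,\dots,S_k$ be its connected components (two boxes being adjacent when they share an edge). For $I\subseteq[k]$ put $\gamma_I:=\alpha\cup\bigl(\bigcup_{i\notin I}S_i^t\bigr)\cup\bigl(\bigcup_{i\in I}S_i\bigr)$, where $S^t$ denotes the reflection of a set of boxes in the main diagonal. Then $I\mapsto\gamma_I$ is a bijection from the set of subsets of $[k]$ (i.e. subsets of the set of connected components of $\Pi_+(\alpha,\beta)$) onto the fiber $\pi_n^{-1}(\alpha,\beta)$. There is a unique Northeast element of $\pi_n^{-1}(\alpha,\beta)$, namely $\gamma_{[k]}$, and a unique Southwest element, namely $\gamma_{\emptyset}$.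
   Context: $\langle n\rangle=\{\bar n<\dots<\bar1<1<\dots<n\}$ with $\bar\imath=-i$. An $n$-element subset $\alpha\subseteq\langle n\rangle$ corresponds to a partition in the $n\times n$ square: take the lattice path from the lower-left to the upper-right corner whose $j$-th unit step is upward if the $j$-th smallest element of $\langle n\rangle$ lies in $\alpha$ and rightward otherwise; the partition consists of the boxes between the path and the top and left edges. Boxes are indexed $(r,c)$ (row from top, column from left); box $(r,c)$ is above the main diagonal if $c>r$. The transpose $\alpha^t$ is the reflection of the diagram in the main diagonal (as a set, $\alpha^t=\langle n\rangle\setminus\{\bar\alpha_1,\dots,\bar\alpha_n\}$). A partition $\lambda$ in the square is Northeast if $\lambda_-^t\subseteq\lambda_+$, where $\lambda_+$ (resp. $\lambda_-$) is the set of boxes of $\lambda$ on or above (resp. on or below) the main diagonal, i.e. if for every box $(r,c)\in\lambda$ with $r>c$ the box $(c,r)$ lies in $\lambda$; $\lambda$ is Southwest if $\lambda^t$ is Northeast. *)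

From mathcomp Require Import all_boot.
Set Implicit Arguments. Unset Strict Implicit. Unset Printing Implicit Defensive.

(* <n> = {nbar < ... < 1bar < 1 < ... < n} is encoded by positions 'I_(2n):
   position j (0-indexed) is the (j+1)-th smallest element of <n>.
   An n-element subset of <n> is a set A : {set 'I_(2n)} with #|A| = n. *)

(* Boxes of the n x n square: (r, c), row from top, column from left, 0-indexed. *)
Definition box (n : nat) := ('I_n * 'I_n)%type.

(* The partition (Young diagram) of a subset A of <n>: the lattice path from the
   lower-left corner takes, at its j-th step, an up step iff position j is in A.
   After m steps the path is at (m - u_m, u_m) with u_m = #{j in A | j < m}.
   Box (r,c) has lower-right corner (c+1, n-r-1) and lies between the path and
   the top/left edges iff u_(n-r+c) <= n-r-1. *)
Definition diag (n : nat) (A : {set 'I_(2 * n)}) : {set box n} :=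
  [set b : box n | #|[set j in A | (j < n - b.1 + b.2)%N]| < n - b.1].

Definition tr (n : nat) (S : {set box n}) : {set box n} :=
  [set ((b.2, b.1) : box n) | b in S].

Definition pi_n (n : nat) (g : {set 'I_(2 * n)}) : {set box n} * {set box n} :=
  (diag g :&: tr (diag g), diag g :|: tr (diag g)).

Definition fiber (n : nat) (a b : {set box n}) : {set {set 'I_(2 * n)}} :=
  [set g : {set 'I_(2 * n)} | (#|g| == n) && (pi_n g == (a, b))].

Definition Pi_plus (n : nat) (a b : {set box n}) : {set box n} :=
  [set x in b :\: a | (x.1 < x.2)%N].

Definition adjb (n : nat) (x y : box n) : bool :=
  ((x.1 == y.1) && ((x.2.+1 == y.2) || (y.2.+1 == x.2)))
  || ((x.2 == y.2) && ((x.1.+1 == y.1) || (y.1.+1 == x.1))).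

Definition adj_in (n : nat) (S : {set box n}) : rel (box n) :=
  fun x y => [&& x \in S, y \in S & adjb x y].

Definition components (n : nat) (S : {set box n}) : {set {set box n}} :=
  [set [set y | connect (adj_in S) x y] | x in S].

Definition gammaI (n : nat) (a b : {set box n}) (I : {set {set box n}})
  : {set box n} :=
  a :|: (\bigcup_(S in components (Pi_plus a b) :\: I) tr S)
    :|: (\bigcup_(S in I) S).

Definition Northeast (n : nat) (l : {set box n}) : bool :=
  [forall r : 'I_n, forall c : 'I_n,
     [&& (r, c) \in l & (c < r)%N] ==> ((c, r) \in l)].

Definition Southwest (n : nat) (l : {set box n}) : bool := Northeast (tr l).

From mathcomp Require Import all_boot.
From mathcomp Require Import zify.
Set Implicit Arguments. Unset Strict Implicit. Unset Printing Implicit Defensive.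

(* A diagram gamma lies over (alpha, beta) exactly when alpha <= gamma <= beta
   and gamma contains exactly one box of each mirror pair in beta \ alpha.
   Closedness of gamma under moving up and left forces this choice to be the
   same for two edge-adjacent boxes of Pi_+, hence constant on each connected
   component; conversely any choice per component yields such a closed set.
   Finally n-subsets of <n> and closed sets of boxes correspond bijectively:
   the subset is recovered from the row lengths of its diagram. *)

Lemma card_ord_lt N k : (k <= N)%N -> #|[set j : 'I_N | (j < k)%N]| = k.
Proof.
move=> leKN; have widen_inj : injective (widen_ord leKN).
  by move=> i i' /(congr1 val) /= Ei; apply: val_inj.
rewrite -[k in RHS](card_ord k) -(card_imset _ widen_inj).
apply: eq_card => j; rewrite inE; apply/idP/imsetP => [ltjk|[i _ ->]] //=.
by exists (Ordinal ltjk) => //; apply: val_inj.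
Qed.

Section PrefixCount.

Variables (n : nat) (A : {set 'I_(2 * n)}).

Definition prefix_count (m : nat) := #|[set j in A | (j < m)%N]|.

Lemma prefix_count_mono : {homo prefix_count : m m' / (m <= m')%N}.
Proof.
move=> m m' lemm'; apply/subset_leq_card/subsetP => j; rewrite !inE.
by case/andP=> -> /leq_trans; apply.
Qed.

Lemma prefix_countS (j : 'I_(2 * n)) : prefix_count j.+1 = prefix_count j + (j \in A).
Proof.
rewrite /prefix_count (cardsD1 j) !inE ltnSn andbT addnC; congr (_ + _).
apply: eq_card => k; rewrite !inE ltnS leq_eqVlt val_eqE.
by case: (eqVneq k j) => [->|]; rewrite ?ltnn ?andbF.
Qed.

Lemma prefix_count_leS m : (prefix_count m.+1 <= (prefix_count m).+1)%N.
Proof.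
have [ltm|lem] := ltnP m (2 * n).
  by rewrite (prefix_countS (Ordinal ltm)) addnC; case: (_ \in A).
suff -> : prefix_count m.+1 = prefix_count m by [].
apply: eq_card => k; rewrite !inE.
by rewrite (leq_trans (ltn_ord k) lem) (leq_trans (ltn_ord k) (leqW lem)).
Qed.

Lemma prefix_count_le m : (m <= 2 * n)%N -> (prefix_count m <= m)%N.
Proof.
move=> lem; rewrite -[m in X in (_ <= X)%N](card_ord_lt lem).
by apply/subset_leq_card/subsetP => j; rewrite !inE => /andP[].
Qed.

Lemma prefix_count_le_card m : (prefix_count m <= #|A|)%N.
Proof. by apply/subset_leq_card/subsetP => j; rewrite inE => /andP[]. Qed.

(* The m first positions contain at most #|~: A| = 2n - #|A| non-elements of A. *)
Lemma prefix_count_ge m : #|A| = n -> (m <= 2 * n)%N -> (m <= prefix_count m + n)%N.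
Proof.
move=> cardA lem; set lo := [set j : 'I_(2 * n) | (j < m)%N].
have split_lo : prefix_count m + #|lo :\: A| = m.
  rewrite -[RHS](card_ord_lt lem) -(cardsID A lo); congr (_ + _).
  by apply: eq_card => j; rewrite !inE andbC.
have : (#|lo :\: A| <= #|~: A|)%N.
  by apply/subset_leq_card/subsetP => j; rewrite !inE => /andP[].
by have := cardsC A; rewrite card_ord cardA; lia.
Qed.

End PrefixCount.

(* Young diagrams in the square are exactly the down-sets of boxes for the
   componentwise order. *)
Definition down_closed n (D : {set box n}) := forall x y : box n,
  x \in D -> (y.1 <= x.1)%N -> (y.2 <= x.2)%N -> y \in D.

Lemma down_closed_from_covers n (D : {set box n}) :
  (forall x y : box n, x \in D -> (y.1 <= x.1)%N -> (y.2 <= x.2)%N ->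
     (y.1 + y.2).+1 = x.1 + x.2 -> y \in D) -> down_closed D.
Proof.
move=> cover.
suff closed_at k (x y : box n) : x.1 + x.2 = y.1 + y.2 + k -> x \in D ->
    (y.1 <= x.1)%N -> (y.2 <= x.2)%N -> y \in D.
  by move=> x y xD le1 le2; apply: (closed_at (x.1 + x.2 - (y.1 + y.2)) x) => //; lia.
elim: k x y => [|k IHk] [x1 x2] [y1 y2] /= Exy xD le1 le2.
  suff -> : (y1, y2) = (x1, x2) by [].
  by congr pair; apply: val_inj => /=; lia.
have [lt1|ge1] := ltnP y1 x1.
  have ltx1 : (x1.-1 < n)%N by apply: leq_ltn_trans (leq_pred x1) (ltn_ord x1).
  apply: (IHk (Ordinal ltx1, x2)) => /=; try lia.
  by apply: (cover (x1, x2)) => //=; lia.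
have ltx2 : (x2.-1 < n)%N by apply: leq_ltn_trans (leq_pred x2) (ltn_ord x2).
apply: (IHk (x1, Ordinal ltx2)) => /=; try lia.
by apply: (cover (x1, x2)) => //=; lia.
Qed.

Lemma mem_diag n (A : {set 'I_(2 * n)}) (x : box n) :
  (x \in diag A) = (prefix_count A (n - x.1 + x.2) < n - x.1)%N.
Proof. by rewrite inE. Qed.

Lemma diag_down_closed n (A : {set 'I_(2 * n)}) : down_closed (diag A).
Proof.
apply: down_closed_from_covers => -[x1 x2] [y1 y2]; rewrite !mem_diag /= => xA le1 le2 Exy.
have ltx1 := ltn_ord x1; have lty1 := ltn_ord y1.
have [Ey1|ne1] := eqVneq (nat_of_ord y1) x1.
  by have := @prefix_count_mono n A (n - y1 + y2) (n - x1 + x2); lia.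
have -> : n - y1 + y2 = (n - x1 + x2).+1 by lia.
by have := prefix_count_leS A (n - x1 + x2); lia.
Qed.

(* If prefix_count A m < prefix_count B m, the box whose lower-right corner the
   path of A reaches after m steps lies in diag A but not in diag B. *)
Lemma diag_inj n (A B : {set 'I_(2 * n)}) :
  #|A| = n -> #|B| = n -> diag A = diag B -> A = B.
Proof.
have no_lt (A' B' : {set 'I_(2 * n)}) m : #|A'| = n -> #|B'| = n ->
    diag A' = diag B' -> (m <= 2 * n)%N -> ~ (prefix_count A' m < prefix_count B' m)%N.
  move=> cardA cardB eqAB lem lt.
  have := prefix_count_le_card B' m; have := prefix_count_le B' lem.
  have := prefix_count_ge cardA lem => ge le_m le_card.
  have ltr : (n - 1 - prefix_count A' m < n)%N by lia.
  have ltc : (m - 1 - prefix_count A' m < n)%N by lia.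
  have Em : n - (n - 1 - prefix_count A' m) + (m - 1 - prefix_count A' m) = m by lia.
  have : (Ordinal ltr, Ordinal ltc) \in diag A' by rewrite mem_diag /= Em; lia.
  by rewrite eqAB mem_diag /= Em; lia.
move=> cardA cardB eqAB.
have eq_count m : (m <= 2 * n)%N -> prefix_count A m = prefix_count B m.
  move=> lem; have [lt|lt|//] := ltngtP (prefix_count A m) (prefix_count B m).
    by case: (no_lt A B m cardA cardB eqAB lem lt).
  by case: (no_lt B A m cardB cardA (esym eqAB) lem lt).
apply/setP => j; have := prefix_countS A j; have := prefix_countS B j.
rewrite (eq_count j.+1 (ltn_ord j)) (eq_count j (ltnW (ltn_ord j))) => -> /addnI.
by case: (j \in A); case: (j \in B).
Qed.

Section RowLengths.

Variables (n : nat) (D : {set box n}).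
Hypothesis closedD : down_closed D.

Definition row_len (r : 'I_n) := #|[set c : 'I_n | (r, c) \in D]|.

Lemma mem_row_len r c : ((r, c) \in D) = (c < row_len r)%N.
Proof.
apply/idP/idP => [rcD|].
  rewrite -(card_ord_lt (ltn_ord c)); apply/subset_leq_card/subsetP => c'.
  by rewrite !inE ltnS => lec; apply: (closedD rcD).
apply: contraLR; rewrite -leqNgt => rc_notD.
rewrite -[X in (_ <= X)%N](card_ord_lt (ltnW (ltn_ord c))).
apply/subset_leq_card/subsetP => c'; rewrite !inE ltnNge; apply: contraL => lec.
by apply: contra rc_notD => rc'D; apply: (closedD rc'D).
Qed.

Lemma row_len_anti (r r' : 'I_n) : (r <= r')%N -> (row_len r' <= row_len r)%N.
Proof.
move=> ler; apply/subset_leq_card/subsetP => c; rewrite !inE => r'cD.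
exact: (closedD r'cD).
Qed.

Lemma row_len_le r : (row_len r <= n)%N.
Proof. by rewrite -[X in (_ <= X)%N](card_ord n) max_card. Qed.

(* The k-th up step of the boundary path (counted from the bottom) follows k up
   steps and the row_len of row n-1-k right steps. *)
Definition up_step_pos (k : 'I_n) := row_len (rev_ord k) + k.

Lemma up_step_pos_lt k : (up_step_pos k < 2 * n)%N.
Proof. by have := row_len_le (rev_ord k); have := ltn_ord k; rewrite /up_step_pos; lia. Qed.

Lemma up_step_pos_le (k k' : 'I_n) :
  (k <= k')%N -> (up_step_pos k + (k' - k) <= up_step_pos k')%N.
Proof.
move=> lek; have le_rev : (rev_ord k' <= rev_ord k)%N.
  by rewrite /=; have := ltn_ord k'; lia.
by have := row_len_anti le_rev; rewrite /up_step_pos; lia.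
Qed.

Definition subset_of_diagram : {set 'I_(2 * n)} :=
  [set Ordinal (up_step_pos_lt k) | k : 'I_n].

Lemma up_step_ord_inj : injective (fun k => Ordinal (up_step_pos_lt k)).
Proof.
move=> k k' /(congr1 val) /= Ek; apply: val_inj.
have [lek|lek|//] := ltngtP k k'; have := up_step_pos_le (ltnW lek); lia.
Qed.

Lemma card_subset_of_diagram : #|subset_of_diagram| = n.
Proof. by rewrite card_imset ?cardT ?size_enum_ord //; apply: up_step_ord_inj. Qed.

Lemma prefix_count_subset_of_diagram m :
  prefix_count subset_of_diagram m = #|[set k : 'I_n | (up_step_pos k < m)%N]|.
Proof.
rewrite /prefix_count -(card_imset _ up_step_ord_inj); apply: eq_card => j.
rewrite inE; apply/andP/imsetP => [[/imsetP[k _ ->] /= ltm]|[k]].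
  by exists k; rewrite ?inE.
by rewrite inE => ltm ->; split; first exact: imset_f.
Qed.

Lemma diag_subset_of_diagram : diag subset_of_diagram = D.
Proof.
apply/setP => -[r c]; rewrite mem_diag mem_row_len /= prefix_count_subset_of_diagram.
have pos_r : up_step_pos (rev_ord r) = row_len r + (n - r.+1).
  by rewrite /up_step_pos rev_ordK.
have ltr := ltn_ord r; have ltc := ltn_ord c.
have [ltcr|lerc] := ltnP c (row_len r).
  have sub : [set k : 'I_n | (up_step_pos k < n - r + c)%N]
               \subset [set k : 'I_n | (k < n - r.+1)%N].
    apply/subsetP => k; rewrite !inE; apply: contraLR; rewrite -!leqNgt => lek.
    by have := @up_step_pos_le (rev_ord r) k lek; rewrite pos_r; lia.
  have := subset_leq_card sub; rewrite card_ord_lt; last by lia.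
  by move=> le; apply: leq_ltn_trans le _; lia.
have sub : [set k : 'I_n | (k < n - r)%N]
             \subset [set k : 'I_n | (up_step_pos k < n - r + c)%N].
  apply/subsetP => k; rewrite !inE => ltk.
  have lek : (k <= rev_ord r)%N by rewrite /=; lia.
  by have := up_step_pos_le lek; rewrite pos_r; lia.
have := subset_leq_card sub; rewrite card_ord_lt; last by lia.
by move=> le; rewrite ltnNge le.
Qed.

End RowLengths.

Definition tr_box n (x : box n) : box n := (x.2, x.1).

Lemma tr_boxK n : involutive (@tr_box n).
Proof. by case. Qed.

Lemma tr_box_diagonal n (x : box n) : x.1 = x.2 :> nat -> tr_box x = x.
Proof. by case: x => x1 x2 /= Ex; congr pair; apply: val_inj. Qed.

Lemma mem_tr n (S : {set box n}) (x : box n) : (x \in tr S) = (tr_box x \in S).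
Proof.
apply/imsetP/idP => [[y yS ->]|xS]; first by case: y yS.
by exists (tr_box x) => //; case: x xS.
Qed.

Lemma down_closed_tr n (D : {set box n}) : down_closed D -> down_closed (tr D).
Proof.
by move=> closedD x y; rewrite !mem_tr => xD le1 le2; apply: (closedD (tr_box x)).
Qed.

Lemma down_closedI n (D E : {set box n}) :
  down_closed D -> down_closed E -> down_closed (D :&: E).
Proof.
move=> closedD closedE x y; rewrite !inE => /andP[xD xE] le1 le2.
by rewrite (closedD x y) // (closedE x y).
Qed.

Lemma down_closedU n (D E : {set box n}) :
  down_closed D -> down_closed E -> down_closed (D :|: E).
Proof.
move=> closedD closedE x y; rewrite !inE => /orP[xD|xE] le1 le2.
  by rewrite (closedD x y).
by rewrite (closedE x y) ?orbT.
Qed.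

Lemma adjb_sym n : symmetric (@adjb n).
Proof.
move=> x y; rewrite /adjb (eq_sym x.1) (eq_sym x.2).
by rewrite (orbC (x.2.+1 == y.2)) (orbC (x.1.+1 == y.1)).
Qed.

Lemma adjb_cover n (x y : box n) :
  (y.1 <= x.1)%N -> (y.2 <= x.2)%N -> (y.1 + y.2).+1 = x.1 + x.2 -> adjb x y.
Proof.
move=> le1 le2 Exy; rewrite /adjb.
have [Ey1|Ey2] : y.1 = x.1 :> nat \/ y.2 = x.2 :> nat by lia.
  have -> : y.2.+1 == x.2 by apply/eqP; lia.
  by rewrite -val_eqE /= Ey1 eqxx orbT.
have -> : y.1.+1 == x.1 by apply/eqP; lia.
by rewrite -[x.2 == _]val_eqE /= Ey2 eqxx !orbT.
Qed.

Lemma adjb_comparable n (x y : box n) : adjb x y ->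
  ((y.1 <= x.1)%N /\ (y.2 <= x.2)%N) \/ ((x.1 <= y.1)%N /\ (x.2 <= y.2)%N).
Proof.
by rewrite /adjb => /orP[] /andP[/eqP E /orP[] /eqP E']; rewrite ?E; lia.
Qed.

Section Components.

Variables (n : nat) (P : {set box n}).

Definition component (x : box n) : {set box n} := [set y | connect (adj_in P) x y].

Lemma adj_in_sym : symmetric (adj_in P).
Proof. by move=> x y; rewrite /adj_in adjb_sym andbCA. Qed.

Lemma connect_adj_in_sym : connect_sym (adj_in P).
Proof. exact: sym_connect_sym adj_in_sym. Qed.

Lemma connect_adj_in_mem x y : connect (adj_in P) x y -> (x \in P) = (y \in P).
Proof. by apply: closed_connect => u v /and3P[-> ->]. Qed.

Lemma mem_component x : x \in component x.
Proof. by rewrite inE connect0. Qed.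

Lemma component_in_components x : x \in P -> component x \in components P.
Proof. exact: imset_f. Qed.

Lemma componentsP S x : S \in components P -> x \in S -> x \in P /\ S = component x.
Proof.
case/imsetP => x0 x0P -> ; rewrite inE => conn_x0x.
split; first by rewrite -(connect_adj_in_mem conn_x0x).
by apply/setP => y; rewrite !inE (same_connect connect_adj_in_sym conn_x0x).
Qed.

Lemma component_connect x y : connect (adj_in P) x y -> component y = component x.
Proof.
by move=> conn_xy; apply/setP => z; rewrite !inE (same_connect connect_adj_in_sym conn_xy).
Qed.

End Components.

Lemma mem_Pi_plus n (a b : {set box n}) (x : box n) :
  (x \in Pi_plus a b) = [&& x \in b, x \notin a & (x.1 < x.2)%N].
Proof. by rewrite !inE; case: (x \in a); case: (x \in b). Qed.

Lemma Pi_plus_tr_box n (a b : {set box n}) (x : box n) :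
  x \in Pi_plus a b -> tr_box x \notin Pi_plus a b.
Proof. by rewrite !mem_Pi_plus /= => /and3P[_ _ lt]; rewrite ltnNge ltnW ?andbF. Qed.

Section GammaI.

Variables (n : nat) (a b : {set box n}).
Local Notation P := (Pi_plus a b).
Local Notation C := (components (Pi_plus a b)).

Lemma mem_gammaI (I : {set {set box n}}) x : I \subset C ->
  (x \in gammaI a b I) = [|| x \in a,
      (tr_box x \in P) && (component P (tr_box x) \notin I) |
      (x \in P) && (component P x \in I)].
Proof.
move=> subIC; rewrite /gammaI !in_setU -orbA; congr (_ || (_ || _)).
- apply/bigcupP/andP => [[S] | [txP txI]].
    by rewrite inE mem_tr => /andP[SI SC] /(componentsP SC) [-> <-].
  exists (component P (tr_box x)); first by rewrite inE txI component_in_components.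
  by rewrite mem_tr mem_component.
- apply/bigcupP/andP => [[S SI xS] | [xP xI]].
  by have [-> <-] := componentsP (subsetP subIC S SI) xS.
by exists (component P x) => //; rewrite mem_component.
Qed.

Lemma gammaI_inj : {in powerset C &, injective (gammaI a b)}.
Proof.
suff sub_of_eq (I J : {set {set box n}}) : I \subset C -> J \subset C ->
    gammaI a b I = gammaI a b J -> I \subset J.
  move=> I J; rewrite !powersetE => subIC subJC eqIJ.
  by apply/eqP; rewrite eqEsubset (sub_of_eq I J) // (sub_of_eq J I).
move=> subIC subJC eqIJ; apply/subsetP => S SI.
have /imsetP[x xP Sx] := subsetP subIC S SI; rewrite -/(component P x) in Sx.
have : x \in gammaI a b I by rewrite mem_gammaI // xP -Sx SI !orbT.
rewrite eqIJ mem_gammaI // (negbTE (Pi_plus_tr_box xP)) xP Sx /=.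
by case/orP => [xa|//]; move: xP; rewrite mem_Pi_plus xa andbF.
Qed.

End GammaI.

(* If x in D and y notin D, then tr x notin D and tr y in D since both lie in
   beta \ alpha; whichever of x, y is smaller, closedness is contradicted. *)
Lemma Pi_plus_adj_mem n (D : {set box n}) x y : down_closed D ->
  adj_in (Pi_plus (D :&: tr D) (D :|: tr D)) x y -> x \in D -> y \in D.
Proof.
move=> closedD /and3P[xP yP adj_xy] xD; apply: contraT => yD.
move: xP yP; rewrite !mem_Pi_plus !inE !mem_tr xD (negbTE yD) /=.
move=> /andP[txD _] /andP[tyD _].
have [[le1 le2]|[le1 le2]] := adjb_comparable adj_xy.
  by move: yD; rewrite (closedD x).
by move: txD; rewrite (closedD (tr_box y)).
Qed.

(* A component of Pi_+ lies entirely inside or entirely outside D, so D is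
   gamma_I for the set I of components contained in D. *)
Lemma gammaI_of_down_closed n (D : {set box n}) : down_closed D ->
  exists2 I : {set {set box n}},
    I \subset components (Pi_plus (D :&: tr D) (D :|: tr D))
    & D = gammaI (D :&: tr D) (D :|: tr D) I.
Proof.
move=> closedD; pose P := Pi_plus (D :&: tr D) (D :|: tr D).
pose I := [set S in components P | S \subset D].
have subIC : I \subset components P by apply/subsetP => S; rewrite inE => /andP[].
exists I => //.
have closedDP : closed (adj_in P) D.
  by apply: (intro_closed (connect_adj_in_sym P)) => x y; apply: Pi_plus_adj_mem.
have compI x : x \in P -> (component P x \in I) = (x \in D).
  move=> xP; rewrite inE component_in_components //=.
  apply/subsetP/idP => [|xD y]; first by apply; apply: mem_component.
  by rewrite inE => /(closed_connect closedDP) <-.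
have E1 x : (x \in P) && (component P x \in I) = (x \in P) && (x \in D).
  by have [xP|//] := boolP (x \in P); rewrite compI.
have E2 x : (x \in P) && (component P x \notin I) = (x \in P) && (x \notin D).
  by have [xP|//] := boolP (x \in P); rewrite compI.
apply/setP => x; rewrite mem_gammaI // E1 E2 !mem_Pi_plus !inE !mem_tr tr_boxK /=.
case: (ltngtP x.1 x.2) => [_|_|Ex]; last rewrite tr_box_diagonal //;
  by case: (x \in D); case: (tr_box x \in D).
Qed.

Section Fiber.

Variables (n : nat) (D0 : {set box n}).
Hypothesis closedD0 : down_closed D0.
Local Notation a := (D0 :&: tr D0).
Local Notation b := (D0 :|: tr D0).
Local Notation P := (Pi_plus a b).
Local Notation C := (components (Pi_plus a b)).

Lemma tr_box_meet (x : box n) : (tr_box x \in a) = (x \in a).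
Proof. by rewrite !inE !mem_tr tr_boxK andbC. Qed.

Lemma tr_box_join (x : box n) : (tr_box x \in b) = (x \in b).
Proof. by rewrite !inE !mem_tr tr_boxK orbC. Qed.

Lemma meet_sub_join : a \subset b.
Proof. exact: subset_trans (subsetIl _ _) (subsetUl _ _). Qed.

Lemma join_diagonal (x : box n) : x.1 = x.2 :> nat -> (x \in b) = (x \in a).
Proof. by move=> Ex; rewrite !inE mem_tr tr_box_diagonal // orbb andbb. Qed.

Lemma gammaI_meet (I : {set {set box n}}) x : I \subset C ->
  (x \in gammaI a b I) && (tr_box x \in gammaI a b I) = (x \in a).
Proof.
move=> subIC; rewrite !mem_gammaI // tr_boxK !mem_Pi_plus tr_box_meet tr_box_join /=.
case: (x \in a) => //=.
by case: (x \in b); case: (component P x \in I); case: (component P (tr_box x) \in I);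
  case: ltngtP.
Qed.

Lemma gammaI_join (I : {set {set box n}}) x : I \subset C ->
  (x \in gammaI a b I) || (tr_box x \in gammaI a b I) = (x \in b).
Proof.
move=> subIC; rewrite !mem_gammaI // tr_boxK !mem_Pi_plus tr_box_meet tr_box_join /=.
have [xa|xna] /= := boolP (x \in a); first by rewrite (subsetP meet_sub_join).
have [xb|//] /= := boolP (x \in b).
case: ltngtP => [_|_|Ex] /=; rewrite ?andbF ?orbF ?orNb ?orbN //.
by move: xna; rewrite -(join_diagonal (esym Ex)) xb.
Qed.

Lemma setI_tr_gammaI (I : {set {set box n}}) : I \subset C ->
  gammaI a b I :&: tr (gammaI a b I) = a.
Proof. by move=> subIC; apply/setP => x; rewrite inE mem_tr gammaI_meet. Qed.

Lemma setU_tr_gammaI (I : {set {set box n}}) : I \subset C ->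
  gammaI a b I :|: tr (gammaI a b I) = b.
Proof. by move=> subIC; apply/setP => x; rewrite inE mem_tr gammaI_join. Qed.

Lemma gammaI_down_closed (I : {set {set box n}}) : I \subset C ->
  down_closed (gammaI a b I).
Proof.
move=> subIC; have closed_a := down_closedI closedD0 (down_closed_tr closedD0).
have closed_b := down_closedU closedD0 (down_closed_tr closedD0).
apply: down_closed_from_covers => x y xg le1 le2 Exy.
have xb : x \in b by rewrite -(gammaI_join x subIC) xg.
have yb : y \in b := closed_b x y xb le1 le2.
have [ya|yna] := boolP (y \in a); first by rewrite mem_gammaI // ya.
have neq_y : y.1 <> y.2 :> nat by move=> Ey; move: yna; rewrite -join_diagonal ?yb.
move: xg; rewrite !mem_gammaI // => /or3P[xa | /andP[txP txI] | /andP[xP xI]].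
- by move: yna; rewrite (closed_a x).
- have tyP : tr_box y \in P.
    rewrite mem_Pi_plus tr_box_join tr_box_meet yb yna /=.
    by move: txP; rewrite mem_Pi_plus /= => /and3P[_ _]; lia.
  have adj_txy : adj_in P (tr_box x) (tr_box y).
    by rewrite /adj_in txP tyP adjb_cover //=; lia.
  by rewrite tyP (component_connect (connect1 adj_txy)) txI orbT.
- have yP : y \in P.
    rewrite mem_Pi_plus yb yna /=.
    by move: xP; rewrite mem_Pi_plus => /and3P[_ _]; lia.
  have adj_xy : adj_in P x y by rewrite /adj_in xP yP adjb_cover.
  by rewrite yP (component_connect (connect1 adj_xy)) xI !orbT.
Qed.

Lemma tr_gammaI (I : {set {set box n}}) : I \subset C ->
  tr (gammaI a b I) = gammaI a b (C :\: I).
Proof.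
move=> subIC; apply/setP => x.
rewrite mem_tr !mem_gammaI ?subsetDl // tr_boxK tr_box_meet !in_setD.
have [xP|_] := boolP (x \in P); have [txP|_] := boolP (tr_box x \in P);
  rewrite /= ?component_in_components ?andbT ?negbK ?orbF //;
  by case: (x \in a); case: (component P x \in I); case: (component P (tr_box x) \in I).
Qed.

Lemma Northeast_gammaI (I : {set {set box n}}) : I \subset C ->
  Northeast (gammaI a b I) = (I == C).
Proof.
move=> subIC; apply/idP/eqP => [NE|->]; last first.
  apply/forallP => r; apply/forallP => c; apply/implyP => /andP[].
  rewrite !mem_gammaI // => /or3P[rca | /andP[trcP nC] | /andP[rcP _]] ltcr.
  - by rewrite -[(c, r)]/(tr_box (r, c)) tr_box_meet rca.
  - by rewrite component_in_components in nC.
  - by move: rcP; rewrite mem_Pi_plus /= => /and3P[_ _]; lia.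
apply/eqP; rewrite eqEsubset subIC; apply/subsetP => S SC.
have /imsetP[x xP Sx] := SC; rewrite -/(component P x) in Sx; rewrite Sx.
apply: contraT => xnI.
have txg : tr_box x \in gammaI a b I by rewrite mem_gammaI // tr_boxK xP xnI orbT.
have ltx : (x.1 < x.2)%N by move: xP; rewrite mem_Pi_plus => /and3P[].
move/forallP/(_ x.2)/forallP/(_ x.1): NE; rewrite -/(tr_box x) txg ltx /=.
rewrite -surjective_pairing mem_gammaI // (negbTE (Pi_plus_tr_box xP)) (negbTE xnI).
by move: xP; rewrite mem_Pi_plus !andbF => /and3P[_ /negbTE ->].
Qed.

Lemma Southwest_gammaI (I : {set {set box n}}) : I \subset C ->
  Southwest (gammaI a b I) = (I == set0).
Proof.
move=> subIC; rewrite /Southwest tr_gammaI // Northeast_gammaI ?subsetDl //.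
apply/eqP/eqP => [eqCI|->]; last by rewrite setD0.
apply/setP => S; rewrite inE; apply/negP => SI.
by have := subsetP subIC S SI; rewrite -eqCI inE SI.
Qed.

Lemma diag_subset_of_gammaI (I : {set {set box n}}) : I \subset C ->
  diag (subset_of_diagram (gammaI a b I)) = gammaI a b I.
Proof. by move=> subIC; rewrite diag_subset_of_diagram //; apply: gammaI_down_closed. Qed.

Lemma subset_of_gammaI_in_fiber (I : {set {set box n}}) : I \subset C ->
  subset_of_diagram (gammaI a b I) \in fiber a b.
Proof.
move=> subIC; rewrite inE /pi_n diag_subset_of_gammaI // setI_tr_gammaI //.
by rewrite setU_tr_gammaI // card_subset_of_diagram ?eqxx //; apply: gammaI_down_closed.
Qed.

Lemma fiber_subset_of_gammaI g : g \in fiber a b ->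
  exists2 I : {set {set box n}}, I \subset C & g = subset_of_diagram (gammaI a b I).
Proof.
rewrite inE => /andP[/eqP card_g /eqP [Ea Eb]].
have [I subIC Eg] := gammaI_of_down_closed (diag_down_closed (A := g)).
rewrite Ea Eb in subIC Eg; exists I => //.
apply: diag_inj => //; last by rewrite diag_subset_of_gammaI.
by rewrite card_subset_of_diagram //; apply: gammaI_down_closed.
Qed.

Lemma fiber_diag_unique (p : pred {set box n}) (J : {set {set box n}}) :
  J \subset C ->
  (forall I : {set {set box n}}, I \subset C -> p (gammaI a b I) = (I == J)) ->
  [set g in fiber a b | p (diag g)] = [set subset_of_diagram (gammaI a b J)].
Proof.
move=> subJC pE; apply/setP => g; rewrite in_set1 inE.
apply/andP/eqP => [[/fiber_subset_of_gammaI[I subIC ->]]|->].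
  by rewrite diag_subset_of_gammaI // pE // => /eqP->.
by rewrite subset_of_gammaI_in_fiber // diag_subset_of_gammaI // pE.
Qed.

End Fiber.

Unset Implicit Arguments.

Theorem proposition2p10 (n : nat) (a b : {set box n}) :
  (0 < n)%N ->
  (exists g0 : {set 'I_(2 * n)}, #|g0| = n /\ pi_n g0 = (a, b)) ->
  exists f : {set {set box n}} -> {set 'I_(2 * n)},
    [/\ forall I : {set {set box n}}, I \subset components (Pi_plus a b) -> diag (f I) = gammaI a b I,
        {in powerset (components (Pi_plus a b)) &, injective f},
        f @: powerset (components (Pi_plus a b)) = fiber a b,
        [set g in fiber a b | Northeast (diag g)] = [set f (components (Pi_plus a b))]
      & [set g in fiber a b | Southwest (diag g)] = [set f set0]].
Proof.
move=> _ [g0 [_ [<- <-]]]; have closed0 := diag_down_closed (A := g0).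
exists (fun I => subset_of_diagram
                   (gammaI (diag g0 :&: tr (diag g0)) (diag g0 :|: tr (diag g0)) I)).
split.
- by move=> I; apply: diag_subset_of_gammaI.
- move=> I J; rewrite !powersetE => subIC subJC /(congr1 (fun g => diag g)).
  rewrite (diag_subset_of_gammaI closed0 subIC) (diag_subset_of_gammaI closed0 subJC).
  by apply: gammaI_inj; rewrite powersetE.
- apply/setP => g; apply/imsetP/idP => [[I + ->]|].
    by rewrite powersetE; apply: subset_of_gammaI_in_fiber.
  case/(fiber_subset_of_gammaI closed0) => I subIC ->.
  by exists I; rewrite ?powersetE.
- apply: (fiber_diag_unique closed0 (p := @Northeast n)) => // I.
  exact: Northeast_gammaI.
- apply: (fiber_diag_unique closed0 (p := @Southwest n)) => [|I]; first exact: sub0set.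
  exact: Southwest_gammaI.
Qed.
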